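(* For a two-player game with two strategies $A,B$ per player and real payoff matrices $G_1=\begin{bmatrix}g_1^{AA}&g_1^{AB}\\ g_1^{BA}&g_1^{BB}\end{bmatrix}$, $G_2=\begin{bmatrix}g_2^{AA}&g_2^{AB}\\ g_2^{BA}&g_2^{BB}\end{bmatrix}$ (rows: player 1's strategy, columns: player 2's), let $\alpha=\operatorname{sgn}(g_1^{AA}-g_1^{BA})$, $\beta=\operatorname{sgn}(g_1^{AB}-g_1^{BB})$, $\gamma=\operatorname{sgn}(g_2^{AA}-g_2^{AB})$, $\delta=\operatorname{sgn}(g_2^{BA}-g_2^{BB})$ (with $\operatorname{sgn}(0)=0$), and define the map \[ \Phi(G_1,G_2)=\left(\begin{bmatrix}\alpha&\beta\\-\alpha&-\beta\end{bmatrix},\ \begin{bmatrix}\gamma&-\gamma\\ \delta&-\delta\end{bmatrix}\right). \] Then: (i) the image of $\Phi$ over all real $2\times2$ games is the set $\mathcal{F}$ of the $3^4=81$ games obtained for $(\alpha,\beta,\gamma,\delta)\in\{-1,0,1\}^4$; (ii) $\Phi$ preserves best responses: for every game, each player $p$ and each strategy of the opponent, player $p$'s (weak) preference between its own two strategies, i.e. the sign of the difference of its two payoffs, is the same in $(G_1,G_2)$ and in $\Phi(G_1,G_2)$; (iii) under the equivalence relation on $\mathcal{F}$ generated by permuting player 1's two strategies, permuting player 2's two strategies, and permuting the players (replacing $(G_1,G_2)$ by $(G'_1,G'_2)$ with $G'_1(a_1,a_2)=G_2(a_2,a_1)$, $G'_2(a_1,a_2)=G_1(a_2,a_1)$), $\mathcal{F}$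 splits into exactly 15 equivalence classes: 11 consisting of games in which neither player's payoff is identically zero, 3 consisting of games in which exactly one player's payoff is identically zero, and 1 consisting of the game in which both payoffs are identically zero.
   Context: Strategy permutations and player permutation map games of the form in $\mathcal{F}$ to games of the same form, so the equivalence relation in (iii) is a relation on $\mathcal{F}$. *)

From HB Require Import structures.
From mathcomp Require Import all_boot all_order all_algebra.
From mathcomp Require Import reals.
From Stdlib Require Import Relations.Relation_Operators.
Set Implicit Arguments. Unset Strict Implicit. Unset Printing Implicit Defensive.
Import Order.TTheory GRing.Theory Num.Theory.
Local Open Scope ring_scope.

(* Strategies: A = ord0, B = ord_max in 'I_2. Rows: player 1, columns: player 2. *)
Definition sA : 'I_2 := ord0.
Definition sB : 'I_2 := ord_max.

Definition game (R : realType) := ('M[R]_2 * 'M[R]_2)%type.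

(* The game parametrised by (alpha, beta, gamma, delta):
   ( [alpha beta; -alpha -beta], [gamma -gamma; delta -delta] ). *)
Definition Fgame (R : realType) (a b c d : R) : game R :=
  (\matrix_(i < 2, j < 2) ((if i == sA then 1 else -1) * (if j == sA then a else b)),
   \matrix_(i < 2, j < 2) ((if j == sA then 1 else -1) * (if i == sA then c else d))).

Definition Phi (R : realType) (G : game R) : game R :=
  Fgame (Num.sg (G.1 sA sA - G.1 sB sA)) (Num.sg (G.1 sA sB - G.1 sB sB))
        (Num.sg (G.2 sA sA - G.2 sA sB)) (Num.sg (G.2 sB sA - G.2 sB sB)).

Definition sgn_vals (R : realType) : seq R := [:: -1; 0; 1].

Definition inF (R : realType) (G : game R) : Prop :=
  exists a b c d : R, [/\ a \in sgn_vals R, b \in sgn_vals R, c \in sgn_vals R,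
                          d \in sgn_vals R & G = Fgame a b c d].

Definition oswap (i : 'I_2) : 'I_2 := if i == sA then sB else sA.

Definition swap1 (R : realType) (G : game R) : game R :=
  (\matrix_(i, j) G.1 (oswap i) j, \matrix_(i, j) G.2 (oswap i) j).
Definition swap2 (R : realType) (G : game R) : game R :=
  (\matrix_(i, j) G.1 i (oswap j), \matrix_(i, j) G.2 i (oswap j)).
Definition swapP (R : realType) (G : game R) : game R :=
  (\matrix_(i, j) G.2 j i, \matrix_(i, j) G.1 j i).

Definition stepF (R : realType) (G H : game R) : Prop :=
  [/\ inF G, inF H & (H = swap1 G \/ H = swap2 G \/ H = swapP G)].

Definition equivF (R : realType) (G H : game R) : Prop :=
  inF G /\ inF H /\ clos_refl_sym_trans (game R) (@stepF R) G H.

Definition nzero (R : realType) (G : game R) : nat :=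
  ((G.1 == 0%R) + (G.2 == 0%R))%N.

From mathcomp Require Import all_boot all_order all_algebra.
From mathcomp Require Import reals.
From Stdlib Require Import Relations.Relation_Operators.
Set Implicit Arguments. Unset Strict Implicit. Unset Printing Implicit Defensive.
Import Order.TTheory GRing.Theory Num.Theory.
Local Open Scope ring_scope.

(* Phi only remembers the four preference signs (alpha, beta, gamma, delta) of
   a game, and a game of F is determined by them, so Phi is a retraction onto F
   that keeps every preference. On sign patterns the three swaps act by
     (a, b, c, d) |-> (-a, -b, d, c),  (b, a, -c, -d),  (c, d, a, b),
   for every game and not only on F; hence the classes of F are the orbits of a
   dihedral group of order 8 on {-1, 0, 1}^4. That there are 15 of them is a
   finite check: the orbits of 15 representatives are pairwise distinct and
   cover all 81 patterns. The number of zero payoff matrices is invariant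
   under the swaps. *)

Lemma ord2P (i : 'I_2) : i = sA \/ i = sB.
Proof. by case: i => [[|[|//]]] ?; [left|right]; apply: val_inj. Qed.

Lemma oswapK : involutive oswap.
Proof. by move=> i; case: (ord2P i) => ->. Qed.

Lemma row_reindex_eq0 (V : nmodType) m n (f : 'I_m -> 'I_m) (M : 'M[V]_(m, n)) :
  involutive f -> (\matrix_(i, j) M (f i) j == 0) = (M == 0).
Proof.
move=> fK; apply/eqP/eqP => [/matrixP h|->]; apply/matrixP => i j; rewrite !mxE //.
by have := h (f i) j; rewrite !mxE fK.
Qed.

Lemma col_reindex_eq0 (V : nmodType) m n (f : 'I_n -> 'I_n) (M : 'M[V]_(m, n)) :
  involutive f -> (\matrix_(i, j) M i (f j) == 0) = (M == 0).
Proof.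
move=> fK; apply/eqP/eqP => [/matrixP h|->]; apply/matrixP => i j; rewrite !mxE //.
by have := h i (f j); rewrite !mxE fK.
Qed.

Lemma transpose_eq0 (V : nmodType) m n (M : 'M[V]_(m, n)) :
  (\matrix_(i, j) M j i == 0) = (M == 0).
Proof. by rewrite -trmx_eq0; congr (_ == 0); apply/matrixP => i j; rewrite !mxE. Qed.

Lemma sgz_sub_opp (D : realDomainType) (x : D) : sgz (x - - x) = sgz x.
Proof. by rewrite opprK -mulr2n -mulr_natr sgzM (@gtr0_sgz _ 2) ?mulr1. Qed.

(* Sign patterns have integer entries so that the orbit computations below are
   decided by [vm_compute]. *)
Definition code := (int * int * int * int)%type.
Definition signs : seq int := [:: -1; 0; 1].
Definition sign_code (t : code) : bool :=
  let: (a, b, c, d) := t in [&& a \in signs, b \in signs, c \in signs & d \in signs].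
Definition sign_codes : seq code :=
  [seq (abc, d) | abc <- [seq (ab, c) | ab <- [seq (a, b) | a <- signs, b <- signs],
                                        c <- signs], d <- signs].

Lemma sign_codesP (P : pred code) : all P sign_codes -> forall t, sign_code t -> P t.
Proof.
move=> /allP hP [[[a b] c] d] /and4P[ha hb hc hd]; apply: hP.
by do 3!apply: (allpairs_f pair) => //.
Qed.

Lemma signsN z : z \in signs -> - z \in signs.
Proof. by rewrite !inE => /or3P[] /eqP ->. Qed.

Inductive symmetry := RowSwap | ColSwap | PlayerSwap.

Definition act_code (s : symmetry) (t : code) : code :=
  let: (a, b, c, d) := t in
  match s with
  | RowSwap => (- a, - b, d, c)
  | ColSwap => (b, a, - c, - d)
  | PlayerSwap => (c, d, a, b)
  end.

Lemma sign_code_act s t : sign_code t -> sign_code (act_code s t).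
Proof.
by case: t => [[[a b] c] d] /and4P[ha hb hc hd]; case: s; rewrite /= ?signsN ?ha ?hb ?hc ?hd.
Qed.

Definition act_word (w : seq symmetry) (t : code) : code := foldr act_code t w.

Lemma sign_code_act_word w t : sign_code t -> sign_code (act_word w t).
Proof. by move=> ht; elim: w => //= s w; apply: sign_code_act. Qed.

(* PlayerSwap conjugates RowSwap into ColSwap, so the group generated by the
   three swaps is dihedral of order 8 and consists of these words. *)
Definition dihedral_words : seq (seq symmetry) :=
  [:: [::]; [:: RowSwap]; [:: ColSwap]; [:: RowSwap; ColSwap];
      [:: PlayerSwap]; [:: RowSwap; PlayerSwap]; [:: ColSwap; PlayerSwap];
      [:: RowSwap; ColSwap; PlayerSwap]].

Definition code_orbit (t : code) : seq code := map (act_word^~ t) dihedral_words.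

Lemma mem_code_orbit t : t \in code_orbit t.
Proof. by rewrite inE eqxx. Qed.

Lemma code_orbit_word t u : u \in code_orbit t -> exists w, u = act_word w t.
Proof.
rewrite /code_orbit; elim: dihedral_words => //= w ws IH.
by rewrite inE => /orP[/eqP->|/IH//]; exists w.
Qed.

Lemma code_orbit_act s t :
  sign_code t -> perm_eq (code_orbit (act_code s t)) (code_orbit t).
Proof.
have check : all (fun t => [&& perm_eq (code_orbit (act_code RowSwap t)) (code_orbit t),
                              perm_eq (code_orbit (act_code ColSwap t)) (code_orbit t) &
                              perm_eq (code_orbit (act_code PlayerSwap t)) (code_orbit t)])
                 sign_codes by vm_compute.
by move=> /(sign_codesP check) /and3P[]; case: s.
Qed.

Definition rep_codes : seq code :=
  [:: (-1, -1, -1, -1); (-1, -1, -1, 0); (-1, -1, -1, 1); (-1, -1, 0, -1);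
      (-1, -1, 0, 0); (-1, 0, -1, 0); (-1, 0, -1, 1); (-1, 0, 0, -1);
      (-1, 0, 0, 0); (-1, 0, 0, 1); (-1, 0, 1, -1); (-1, 1, -1, 1);
      (-1, 1, 0, 0); (-1, 1, 1, -1); (0, 0, 0, 0)].

Lemma rep_codes_sign : {in rep_codes, forall r, sign_code r}.
Proof. by apply/allP; vm_compute. Qed.

Lemma uniq_rep_codes : uniq rep_codes.
Proof. by vm_compute. Qed.

Lemma rep_codes_orbit_inj :
  {in rep_codes &, forall r u, perm_eq (code_orbit r) (code_orbit u) -> r = u}.
Proof.
have check : all (fun r => all (fun u => (u \in code_orbit r) ==> (r == u)) rep_codes)
                 rep_codes by vm_compute.
move=> r u /(allP check) /allP /[apply] /implyP sep /perm_mem eq_orb.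
by apply/eqP/sep; rewrite eq_orb mem_code_orbit.
Qed.

Lemma rep_codes_cover t : sign_code t -> exists2 r, r \in rep_codes & r \in code_orbit t.
Proof.
have check : all (fun t => has (mem (code_orbit t)) rep_codes) sign_codes by vm_compute.
by move=> /(sign_codesP check) /hasP.
Qed.

Definition code_nzero (t : code) : nat :=
  let: (a, b, c, d) := t in ((a == 0) && (b == 0)) + ((c == 0) && (d == 0)).

Section Games.

Variable R : realType.
Implicit Types (G H : game R) (a b c d : R) (t : code).

Lemma Fgame_inj a b c d a' b' c' d' :
  Fgame a b c d = Fgame a' b' c' d' -> [/\ a = a', b = b', c = c' & d = d'].
Proof.
move=> /(congr1 (fun G : game R => (G.1 sA sA, G.1 sA sB, G.2 sA sA, G.2 sB sA))).
by rewrite !mxE /= !mul1r => -[].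
Qed.

Lemma Fgame1_eq0 a b c d : ((Fgame a b c d).1 == 0) = (a == 0) && (b == 0).
Proof.
apply/eqP/andP => [/matrixP h | [/eqP-> /eqP->]].
  by have := h sA sA; have := h sA sB; rewrite !mxE /= !mul1r => -> ->.
by apply/matrixP => i j; rewrite !mxE if_same mulr0.
Qed.

Lemma Fgame2_eq0 a b c d : ((Fgame a b c d).2 == 0) = (c == 0) && (d == 0).
Proof.
apply/eqP/andP => [/matrixP h | [/eqP-> /eqP->]].
  by have := h sA sA; have := h sB sA; rewrite !mxE /= !mul1r => -> ->.
by apply/matrixP => i j; rewrite !mxE if_same mulr0.
Qed.

Lemma swap1_Fgame a b c d : swap1 (Fgame a b c d) = Fgame (- a) (- b) d c.
Proof.
by congr pair; apply/matrixP => i j; rewrite !mxE;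
  case: (ord2P i) => ->; case: (ord2P j) => ->; rewrite /= ?mulN1r ?mul1r ?opprK.
Qed.

Lemma swap2_Fgame a b c d : swap2 (Fgame a b c d) = Fgame b a (- c) (- d).
Proof.
by congr pair; apply/matrixP => i j; rewrite !mxE;
  case: (ord2P i) => ->; case: (ord2P j) => ->; rewrite /= ?mulN1r ?mul1r ?opprK.
Qed.

Lemma swapP_Fgame a b c d : swapP (Fgame a b c d) = Fgame c d a b.
Proof.
by congr pair; apply/matrixP => i j; rewrite !mxE;
  case: (ord2P i) => ->; case: (ord2P j) => ->.
Qed.

Definition pref1 G (j : 'I_2) : int := sgz (G.1 sA j - G.1 sB j).
Definition pref2 G (i : 'I_2) : int := sgz (G.2 i sA - G.2 i sB).

Definition pattern G : code := (pref1 G sA, pref1 G sB, pref2 G sA, pref2 G sB).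

Definition game_of t : game R :=
  let: (a, b, c, d) := t in Fgame a%:~R b%:~R c%:~R d%:~R.

Lemma Phi_pattern G : Phi G = game_of (pattern G).
Proof. by rewrite /Phi !sgrEz. Qed.

Lemma sign_code_pattern G : sign_code (pattern G).
Proof. by rewrite /= !inE; do 4!case: sgzP => _ //=. Qed.

Lemma pattern_Fgame a b c d : pattern (Fgame a b c d) = (sgz a, sgz b, sgz c, sgz d).
Proof. by rewrite /pattern /pref1 /pref2 !mxE /= !mul1r !mulN1r !sgz_sub_opp. Qed.

Lemma sgz_sign (z : int) : z \in signs -> sgz z = z.
Proof. by rewrite !inE => /or3P[] /eqP ->. Qed.

Lemma pattern_game_of t : sign_code t -> pattern (game_of t) = t.
Proof.
by case: t => [[[a b] c] d] /and4P[ha hb hc hd]; rewrite pattern_Fgame !sgz_int !sgz_sign.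
Qed.

Lemma pattern_Phi G : pattern (Phi G) = pattern G.
Proof. by rewrite Phi_pattern pattern_game_of ?sign_code_pattern. Qed.

Lemma pref1_Phi G : pref1 (Phi G) =1 pref1 G.
Proof. by have := pattern_Phi G; case=> e1 e2 _ _ j; case: (ord2P j) => ->. Qed.

Lemma pref2_Phi G : pref2 (Phi G) =1 pref2 G.
Proof. by have := pattern_Phi G; case=> _ _ e1 e2 i; case: (ord2P i) => ->. Qed.

Lemma sgn_vals_signs : sgn_vals R = [seq z%:~R | z <- signs].
Proof. by rewrite /= mulrN1z mulr0z mulr1z. Qed.

Lemma inF_game_of t : sign_code t -> inF (game_of t).
Proof.
case: t => [[[a b] c] d] /and4P[ha hb hc hd].
by exists a%:~R, b%:~R, c%:~R, d%:~R; rewrite sgn_vals_signs !map_f.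
Qed.

Lemma inFP G : inF G -> exists2 t, sign_code t & G = game_of t.
Proof.
rewrite /inF sgn_vals_signs => -[_ [_ [_ [_ [/mapP[a ha ->] /mapP[b hb ->]
                                         /mapP[c hc ->] /mapP[d hd ->] ->]]]]].
by exists (a, b, c, d); rewrite //= ha hb hc hd.
Qed.

Definition act_game (s : symmetry) : game R -> game R :=
  match s with RowSwap => @swap1 R | ColSwap => @swap2 R | PlayerSwap => @swapP R end.

Lemma pattern_act s G : pattern (act_game s G) = act_code s (pattern G).
Proof.
by case: s; rewrite /pattern /pref1 /pref2 /= !mxE /= -?sgzN ?opprB.
Qed.

Lemma act_game_of s t : act_game s (game_of t) = game_of (act_code s t).
Proof.
case: t => [[[a b] c] d]; case: s => /=;
  by rewrite ?swap1_Fgame ?swap2_Fgame ?swapP_Fgame ?mulrNz.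
Qed.

Lemma nzero_act s G : nzero (act_game s G) = nzero G.
Proof.
case: s; rewrite /nzero /=.
- by rewrite !row_reindex_eq0 //; apply: oswapK.
- by rewrite !col_reindex_eq0 //; apply: oswapK.
- by rewrite !transpose_eq0 addnC.
Qed.

Lemma nzero_game_of t : nzero (game_of t) = code_nzero t.
Proof. by case: t => [[[a b] c] d]; rewrite /nzero Fgame1_eq0 Fgame2_eq0 !intr_eq0. Qed.

Lemma stepF_act G H : stepF G H -> exists s, H = act_game s G.
Proof. by case=> _ _ [|[|]] ->; [exists RowSwap|exists ColSwap|exists PlayerSwap]. Qed.

Lemma stepF_act_game s G : inF G -> inF (act_game s G) -> stepF G (act_game s G).
Proof. by case: s => hG hH; split=> //; [left|right; left|right; right]. Qed.

Lemma orbit_pattern_equiv G H :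
  clos_refl_sym_trans _ (@stepF R) G H ->
  perm_eq (code_orbit (pattern G)) (code_orbit (pattern H)).
Proof.
elim=> {G H} [G H /stepF_act[s ->] | G | G H _ | G H K _ GH _ HK].
- by rewrite pattern_act perm_sym code_orbit_act ?sign_code_pattern.
- exact: perm_refl.
- by rewrite perm_sym.
- exact: perm_trans GH HK.
Qed.

Lemma nzero_equiv G H : clos_refl_sym_trans _ (@stepF R) G H -> nzero G = nzero H.
Proof.
elim=> {G H} [G H /stepF_act[s ->] | G | G H _ | G H K _ -> _ ->] //.
by rewrite nzero_act.
Qed.

Lemma equiv_act_word w t :
  sign_code t -> clos_refl_sym_trans _ (@stepF R) (game_of t) (game_of (act_word w t)).
Proof.
move=> ht; elim: w => [|s w IH] /=; first exact: rst_refl.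
apply: rst_trans IH _; apply: rst_step; rewrite -act_game_of.
have hw := sign_code_act_word w ht.
apply: stepF_act_game; first exact: inF_game_of.
by rewrite act_game_of; apply: inF_game_of; apply: sign_code_act.
Qed.

Lemma equivF_rep_codes r u :
  r \in rep_codes -> u \in rep_codes -> equivF (game_of r) (game_of u) -> r = u.
Proof.
move=> hr hu [_ [_ /orbit_pattern_equiv]].
by rewrite !pattern_game_of ?rep_codes_sign //; apply: rep_codes_orbit_inj.
Qed.

Lemma equivF_rep_codes_cover G : inF G -> exists2 r, r \in rep_codes & equivF (game_of r) G.
Proof.
move=> /inFP[t ht ->]; have [r hr /code_orbit_word[w r_eq]] := rep_codes_cover ht.
exists r => //; split; first exact/inF_game_of/rep_codes_sign.
by split; [exact: inF_game_of|rewrite r_eq; apply/rst_sym/equiv_act_word].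
Qed.

End Games.

Theorem mainTheorem6 (R : realType) :
  (* (i) the image of Phi is exactly F, and F has 3^4 = 81 distinct members *)
  ((forall G : game R, inF (Phi G)) /\
   (forall H : game R, inF H -> exists G : game R, Phi G = H) /\
   (forall a b c d a' b' c' d' : R,
      a \in sgn_vals R -> b \in sgn_vals R -> c \in sgn_vals R -> d \in sgn_vals R ->
      a' \in sgn_vals R -> b' \in sgn_vals R -> c' \in sgn_vals R -> d' \in sgn_vals R ->
      Fgame a b c d = Fgame a' b' c' d' -> [/\ a = a', b = b', c = c' & d = d'])) /\
  (* (ii) Phi preserves the preferences (best responses) of both players *)
  (forall G : game R,
     (forall j : 'I_2, Num.sg (G.1 sA j - G.1 sB j) = Num.sg ((Phi G).1 sA j - (Phi G).1 sB j)) /\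
     (forall i : 'I_2, Num.sg (G.2 i sA - G.2 i sB) = Num.sg ((Phi G).2 i sA - (Phi G).2 i sB))) /\
  (* (iii) exactly 15 equivalence classes: 11 / 3 / 1 by number of zero payoffs *)
  (exists reps : seq (game R),
     size reps = 15%N /\
     (forall r, r \in reps -> inF r) /\
     (forall i j : nat, (i < 15)%N -> (j < 15)%N -> i != j ->
        ~ equivF (nth (0, 0) reps i) (nth (0, 0) reps j)) /\
     (forall G : game R, inF G -> exists2 r, r \in reps & equivF r G) /\
     (forall r G, r \in reps -> equivF r G -> nzero G = nzero r) /\
     count (fun r => nzero r == 0%N) reps = 11%N /\
     count (fun r => nzero r == 1%N) reps = 3%N /\
     count (fun r => nzero r == 2%N) reps = 1%N).
Proof.
split; [split; [|split]|split].
- by move=> G; rewrite Phi_pattern; apply/inF_game_of/sign_code_pattern.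
- by move=> _ /inFP[t ht ->]; exists (game_of R t); rewrite Phi_pattern pattern_game_of.
- by move=> a b c d a' b' c' d' _ _ _ _ _ _ _ _; apply: Fgame_inj.
- move=> G; split=> k; rewrite !sgrEz; congr _%:~R.
    exact/esym/pref1_Phi.
  exact/esym/pref2_Phi.
exists (map (game_of R) rep_codes); split; first by rewrite size_map.
split; first by move=> _ /mapP[r hr ->]; apply/inF_game_of/rep_codes_sign.
split.
  move=> i j hi hj ij; pose c0 : code := (0, 0, 0, 0).
  have [ri rj] : nth c0 rep_codes i \in rep_codes /\ nth c0 rep_codes j \in rep_codes.
    by rewrite !mem_nth.
  rewrite !(nth_map c0) // => /(equivF_rep_codes ri rj)/eqP.
  by rewrite nth_uniq ?uniq_rep_codes // (negbTE ij).
split.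
  by move=> G /equivF_rep_codes_cover[r hr hrG]; exists (game_of R r); rewrite ?map_f.
split; first by move=> r G _ [_ [_ /nzero_equiv]].
have count_nzero k : count (fun r => nzero r == k) (map (game_of R) rep_codes) =
                     count (fun t => code_nzero t == k) rep_codes.
  by rewrite count_map; apply: eq_count => t /=; rewrite nzero_game_of.
by rewrite !count_nzero.
Qed.
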